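(* Let $\phi : D\to D'$ be a natural transformation between Dirichlet functors. Then $\phi$ is cartesian (i.e. for every function $g:X\to X'$ the naturality square with sides $\phi_{X'}:D(X')\to D'(X')$, $\phi_X:D(X)\to D'(X)$, $D(g)$, $D'(g)$ is a pullback in $\mathbf{Set}$) if and only if the square $D(1)\xrightarrow{\phi_1}D'(1)$ over $D(0)\xrightarrow{\phi_0}D'(0)$ (with vertical maps $D(!_0)$ and $D'(!_0)$) is a pullback. As a corollary, the equivalence $\mathbf{Dir}\simeq\mathbf{Set}^{\downarrow}$ given by evaluation at $!_0$ restricts to an equivalence $\mathbf{Dir}_{\ulcorner}\simeq\mathbf{Set}^{\downarrow}_{\ulcorner}$.
   Context: A Dirichlet functor is a functor $D:\mathbf{Set}^{op}\to\mathbf{Set}$ preserving connected limits; $\mathbf{Dir}$ is the category of Dirichlet functors and natural transformations, which is equivalent to $\mathbf{Set}^{\downarrow}$ (functions $E\to B$ and commuting squares) via $D\mapsto (D(!_0):D(1)\to D(0))$, where $!_0:0\to1$ is the unique map from the empty set. $\mathbf{Dir}_{\ulcorner}$ is the (wide) subcategory of Dirichlet functors and cartesian natural transformations; $\mathbf{Set}^{\downarrow}_{\ulcorner}$ is the subcategory of bundles and morphisms that are pullback squares. *)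

(* "sets" are Rocq types, functions are Rocq functions,
   equality of functions is taken pointwise. *)
From Stdlib Require Import Relations.

Record Cat := {
  ob : Type;
  hom : ob -> ob -> Type;
  cid : forall a, hom a a;
  ccomp : forall a b c, hom b c -> hom a b -> hom a c;
  ccomp_id_l : forall a b (f : hom a b), ccomp a b b (cid b) f = f;
  ccomp_id_r : forall a b (f : hom a b), ccomp a a b f (cid a) = f;
  ccomp_assoc : forall a b c d (f : hom a b) (g : hom b c) (h : hom c d),
      ccomp a c d h (ccomp a b c g f) = ccomp a b d (ccomp b c d h g) f
}.
Arguments ccomp {J a b c} : rename.
Arguments cid {J} : rename.

Definition connected (J : Cat) : Prop :=
  inhabited (ob J) /\
  forall a b : ob J,
    clos_refl_sym_trans (ob J) (fun x y => inhabited (hom J x y)) a b.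

Record Diagram (J : Cat) := {
  dob : ob J -> Type;
  dmap : forall a b, hom J a b -> dob a -> dob b;
  dmap_id : forall a x, dmap a a (cid a) x = x;
  dmap_comp : forall a b c (f : hom J a b) (g : hom J b c) x,
      dmap a c (ccomp g f) x = dmap b c g (dmap a b f x)
}.
Arguments dob {J}.
Arguments dmap {J} F {a b} : rename.

Definition is_colimit {J : Cat} (F : Diagram J) (C : Type)
  (iota : forall j, dob F j -> C) : Prop :=
  (forall a b (u : hom J a b) x, iota b (dmap F u x) = iota a x) /\
  forall (T : Type) (t : forall j, dob F j -> T),
    (forall a b (u : hom J a b) x, t b (dmap F u x) = t a x) ->
    exists h : C -> T,
      (forall j x, h (iota j x) = t j x) /\
      (forall h' : C -> T, (forall j x, h' (iota j x) = t j x) -> forall c, h' c = h c).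

Record CFun := {
  fob : Type -> Type;
  fmap : forall X Y : Type, (X -> Y) -> fob Y -> fob X;
  fmap_id : forall X (x : fob X), fmap X X (fun z => z) x = x;
  fmap_comp : forall X Y Z (f : X -> Y) (g : Y -> Z) (z : fob Z),
      fmap X Z (fun x => g (f x)) z = fmap X Y f (fmap Y Z g z)
}.
Arguments fmap D {X Y} : rename.

Definition preserves_limit_of (D : CFun) {J : Cat} (F : Diagram J) (C : Type)
  (iota : forall j, dob F j -> C) : Prop :=
  forall (T : Type) (q : forall j, T -> fob D (dob F j)),
    (forall a b (u : hom J a b) t, fmap D (dmap F u) (q b t) = q a t) ->
    exists h : T -> fob D C,
      (forall j t, fmap D (iota j) (h t) = q j t) /\
      (forall h' : T -> fob D C, (forall j t, fmap D (iota j) (h' t) = q j t) ->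
         forall t, h' t = h t).

(* A Dirichlet functor: D : Set^op -> Set preserving connected limits, i.e.
   sending connected colimits in Set (= connected limits in Set^op) to limits. *)
Definition is_dirichlet (D : CFun) : Prop :=
  forall (J : Cat), connected J ->
  forall (F : Diagram J) (C : Type) (iota : forall j, dob F j -> C),
    is_colimit F C iota -> preserves_limit_of D F C iota.

Definition natural (D D' : CFun) (phi : forall X, fob D X -> fob D' X) : Prop :=
  forall X Y (g : X -> Y) (y : fob D Y), phi X (fmap D g y) = fmap D' g (phi Y y).

(* The square   Q --pa--> A
                |         |
               pb         f
                v         v
                B --g---> P     is a pullback in Set. *)
Definition is_pullback {Q A B P : Type} (pa : Q -> A) (pb : Q -> B)
  (f : A -> P) (g : B -> P) : Prop :=
  (forall z, f (pa z) = g (pb z)) /\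
  forall (T : Type) (x : T -> A) (y : T -> B),
    (forall t, f (x t) = g (y t)) ->
    exists h : T -> Q,
      (forall t, pa (h t) = x t /\ pb (h t) = y t) /\
      (forall h' : T -> Q, (forall t, pa (h' t) = x t /\ pb (h' t) = y t) ->
         forall t, h' t = h t).

Definition cartesian (D D' : CFun) (phi : forall X, fob D X -> fob D' X) : Prop :=
  forall (X X' : Type) (g : X -> X'),
    is_pullback (phi X') (fmap D g) (fmap D' g) (phi X).

Definition bang0 : Empty_set -> unit := fun e => match e with end.

Definition bijective {A B : Type} (f : A -> B) : Prop :=
  exists g : B -> A, (forall a, g (f a) = a) /\ (forall b, f (g b) = b).

(* Every set X is the colimit of a connected diagram: one copy of 0 mapping
   into one copy of 1 for each x : X.  A Dirichlet functor D turns this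
   colimit into a limit, so an element of D(X) is the same thing as an element
   b of D(0) together with, for every x : X, an element of D(1) lying over b.
   Consequently a naturality square at g : X -> X' is computed pointwise from
   the square at !_0, which makes the former a pullback as soon as the latter
   is; the same description lets a commuting square at !_0 be extended uniquely
   to a natural transformation.  Conversely, every bundle p : E -> B arises
   from the Dirichlet functor X |-> Σ_b (X -> p^-1 b). *)

From Stdlib Require Import Relations ClassicalEpsilon FunctionalExtensionality
  PropExtensionality ProofIrrelevance.

Lemma is_pullback_pointwise {Q A B P : Type}
  (pa : Q -> A) (pb : Q -> B) (f : A -> P) (g : B -> P) :
  is_pullback pa pb f g <->
  (forall z, f (pa z) = g (pb z)) /\
  (forall a b, f a = g b -> exists! q, pa q = a /\ pb q = b).
Proof.
  split.
  - intros [Hcomm Huniv]. split; [exact Hcomm |].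
    intros a b Hab.
    destruct (Huniv unit (fun _ => a) (fun _ => b) (fun _ => Hab)) as [h [Hh Huniq]].
    exists (h tt). split; [apply Hh |].
    intros q Hq. symmetry. apply (Huniq (fun _ => q)). intros _. exact Hq.
  - intros [Hcomm Hlift]. split; [exact Hcomm |].
    intros T x y Hxy.
    destruct (choice _ (fun t => Hlift _ _ (Hxy t))) as [h Hh].
    exists h. split.
    + intros t. apply Hh.
    + intros h' Hh' t. symmetry. apply (Hh t), Hh'.
Qed.

Lemma choice_family {F G : Type -> Type} (R : forall X, F X -> G X -> Prop) :
  (forall X x, exists y, R X x y) ->
  exists f : forall X, F X -> G X, forall X x, R X x (f X x).
Proof.
  intros H.
  exists (fun X x => proj1_sig (constructive_indefinite_description _ (H X x))).
  intros X x. exact (proj2_sig (constructive_indefinite_description _ (H X x))).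
Qed.

Definition from_empty (X : Type) : Empty_set -> X := fun e => match e with end.
Definition point {X : Type} (x : X) : unit -> X := fun _ => x.

Lemma from_empty_empty : from_empty Empty_set = fun z => z.
Proof. extensionality z. destruct z. Qed.

Lemma point_unit (u : unit) : point u = fun z => z.
Proof. extensionality z. destruct u, z. reflexivity. Qed.

Section Restrictions.

Variable D : CFun.

Lemma fmap_point_bang0 X (x : X) (d : fob D X) :
  fmap D bang0 (fmap D (point x) d) = fmap D (from_empty X) d.
Proof. rewrite <- fmap_comp. f_equal. extensionality z. destruct z. Qed.

Lemma fmap_from_empty_comp X X' (g : X -> X') (d : fob D X') :
  fmap D (from_empty X) (fmap D g d) = fmap D (from_empty X') d.
Proof. rewrite <- fmap_comp. f_equal. extensionality z. destruct z. Qed.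

Lemma fmap_point_comp X X' (g : X -> X') (x : X) (d : fob D X') :
  fmap D (point x) (fmap D g d) = fmap D (point (g x)) d.
Proof. rewrite <- fmap_comp. reflexivity. Qed.

End Restrictions.

Section PointsDiagram.

Variable X : Type.

(* [None] is the copy of 0, [Some x] the copy of 1 indexed by x. *)
Definition points_hom (a b : option X) : Type :=
  match a, b with
  | None, _ => unit
  | Some x, Some y => x = y
  | Some _, None => Empty_set
  end.

Definition points_id (a : option X) : points_hom a a :=
  match a with None => tt | Some x => eq_refl end.

Definition points_comp (a b c : option X) :
  points_hom b c -> points_hom a b -> points_hom a c :=
  match a, b, c with
  | None, _, _ => fun _ _ => tt
  | Some x, Some y, Some z => fun g f => eq_trans f g
  | Some x, None, _ => fun _ f => match f with end
  | Some x, Some y, None => fun g _ => match g with end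
  end.

Lemma points_hom_irrelevant a b (f g : points_hom a b) : f = g.
Proof.
  destruct a, b; simpl in *.
  - apply proof_irrelevance.
  - destruct f.
  - destruct f, g; reflexivity.
  - destruct f, g; reflexivity.
Qed.

Definition points_cat : Cat :=
  {| ob := option X; hom := points_hom; cid := points_id; ccomp := points_comp;
     ccomp_id_l := fun a b f => points_hom_irrelevant a b _ _;
     ccomp_id_r := fun a b f => points_hom_irrelevant a b _ _;
     ccomp_assoc := fun a b c d f g h => points_hom_irrelevant a d _ _ |}.

Definition points_ob (a : option X) : Type :=
  match a with None => Empty_set | Some _ => unit end.

Definition points_map (a b : option X) : points_hom a b -> points_ob a -> points_ob b :=
  match a, b with
  | None, None => fun _ z => z
  | None, Some y => fun _ => bang0
  | Some x, Some y => fun _ z => z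
  | Some x, None => fun u => match u with end
  end.

Lemma points_map_id a x : points_map a a (points_id a) x = x.
Proof. destruct a; simpl in *; [reflexivity | destruct x]. Qed.

Lemma points_map_comp a b c (f : points_hom a b) (g : points_hom b c) x :
  points_map a c (points_comp a b c g f) x = points_map b c g (points_map a b f x).
Proof.
  destruct a, b, c; simpl in *; try destruct f; try destruct g; try destruct x;
    reflexivity.
Qed.

Definition points_diagram : Diagram points_cat :=
  Build_Diagram points_cat points_ob points_map points_map_id points_map_comp.

Definition points_cocone (j : option X) : points_ob j -> X :=
  match j with None => from_empty X | Some x => point x end.

Lemma points_connected : connected points_cat.
Proof.
  split.
  - constructor. exact None.
  - intros a b. apply rst_trans with None.
    + apply rst_sym, rst_step. constructor. destruct a; exact tt.
    + apply rst_step. constructor. destruct b; exact tt.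
Qed.

Lemma points_colimit : is_colimit points_diagram X points_cocone.
Proof.
  split.
  - intros a b u x. destruct a, b; simpl in *; try destruct x; try destruct u;
      reflexivity.
  - intros T t Ht. exists (fun x => t (Some x) tt). split.
    + intros j x. destruct j; simpl in *; destruct x; reflexivity.
    + intros h' Hh' c. rewrite <- (Hh' (Some c) tt). reflexivity.
Qed.

End PointsDiagram.

Section DirichletPoints.

Variable D : CFun.
Hypothesis HD : is_dirichlet D.

Lemma dirichlet_glue X (b : fob D Empty_set) (e : X -> fob D unit) :
  (forall x, fmap D bang0 (e x) = b) ->
  exists! d, fmap D (from_empty X) d = b /\ forall x, fmap D (point x) d = e x.
Proof.
  intros He.
  destruct (HD (points_cat X) (points_connected X) (points_diagram X) X
              (points_cocone X) (points_colimit X) unit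
              (fun j _ => match j return fob D (points_ob X j) with
                          | None => b | Some x => e x end)) as [h [Hh Huniq]].
  - intros [x|] [y|] u t; simpl in *.
    + subst. apply fmap_id.
    + destruct u.
    + apply He.
    + apply fmap_id.
  - exists (h tt). split.
    + split; [exact (Hh None tt) | intros x; exact (Hh (Some x) tt)].
    + intros d [Hb Hp]. symmetry. apply (Huniq (fun _ => d)).
      intros [x|] _; simpl; auto.
Qed.

Lemma dirichlet_ext X (d1 d2 : fob D X) :
  fmap D (from_empty X) d1 = fmap D (from_empty X) d2 ->
  (forall x, fmap D (point x) d1 = fmap D (point x) d2) -> d1 = d2.
Proof.
  intros Hb Hp.
  destruct (dirichlet_glue X (fmap D (from_empty X) d1) (fun x => fmap D (point x) d1))
    as [d [_ Huniq]].
  - intros x. apply fmap_point_bang0.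
  - transitivity d; [symmetry |]; apply Huniq; auto.
Qed.

End DirichletPoints.

Section Transformations.

Variables D D' : CFun.
Hypothesis HD : is_dirichlet D.
Hypothesis HD' : is_dirichlet D'.

Lemma natural_eq_of_eq_01 (phi psi : forall X, fob D X -> fob D' X) :
  natural D D' phi -> natural D D' psi ->
  (forall x, psi unit x = phi unit x) ->
  (forall x, psi Empty_set x = phi Empty_set x) ->
  forall X x, psi X x = phi X x.
Proof.
  intros Hphi Hpsi H1 H0 X x. apply (dirichlet_ext D' HD').
  - rewrite <- Hphi, <- Hpsi. apply H0.
  - intros y. rewrite <- Hphi, <- Hpsi. apply H1.
Qed.

Lemma natural_extension
  (f1 : fob D unit -> fob D' unit) (f0 : fob D Empty_set -> fob D' Empty_set) :
  (forall x, fmap D' bang0 (f1 x) = f0 (fmap D bang0 x)) ->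
  exists phi : forall X, fob D X -> fob D' X,
    natural D D' phi /\
    (forall x, phi unit x = f1 x) /\ (forall x, phi Empty_set x = f0 x).
Proof.
  intros Hsq.
  assert (Hglue : forall X (d : fob D X), exists d',
             fmap D' (from_empty X) d' = f0 (fmap D (from_empty X) d) /\
             forall x, fmap D' (point x) d' = f1 (fmap D (point x) d)).
  { intros X d.
    destruct (dirichlet_glue D' HD' X (f0 (fmap D (from_empty X) d))
                (fun x => f1 (fmap D (point x) d))) as [d' [Hd' _]].
    - intros x. rewrite Hsq, fmap_point_bang0. reflexivity.
    - exists d'. exact Hd'. }
  destruct (choice_family _ Hglue) as [phi Hphi].
  pose proof (fun X d => proj1 (Hphi X d)) as Hphi0.
  pose proof (fun X d => proj2 (Hphi X d)) as Hphi1.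
  exists phi. split; [| split].
  - intros X Y g y. apply (dirichlet_ext D' HD').
    + rewrite Hphi0, !fmap_from_empty_comp, Hphi0. reflexivity.
    + intros x. rewrite Hphi1, !fmap_point_comp, Hphi1. reflexivity.
  - intros x. apply (dirichlet_ext D' HD').
    + rewrite Hphi0. symmetry. apply Hsq.
    + intros u. rewrite Hphi1, point_unit, !fmap_id. reflexivity.
  - intros x. apply (dirichlet_ext D' HD').
    + rewrite Hphi0, from_empty_empty, !fmap_id. reflexivity.
    + intros [].
Qed.

Lemma cartesian_of_pullback_bang0 (phi : forall X, fob D X -> fob D' X) :
  natural D D' phi ->
  is_pullback (phi unit) (fmap D bang0) (fmap D' bang0) (phi Empty_set) ->
  cartesian D D' phi.
Proof.
  intros Hn P0 X X' g. apply is_pullback_pointwise. split.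
  { intros z. symmetry. apply Hn. }
  intros a' d Had.
  apply is_pullback_pointwise in P0 as [_ P0].
  (* Over each point x' of X', pair the restriction of a' with that of d to 0. *)
  assert (Hlift : forall x', exists! c, phi unit c = fmap D' (point x') a' /\
                                      fmap D bang0 c = fmap D (from_empty X) d).
  { intros x'. apply P0.
    rewrite fmap_point_bang0, Hn, <- Had, fmap_from_empty_comp. reflexivity. }
  destruct (choice _ Hlift) as [c Hc].
  assert (Hc_uniq : forall x' c', phi unit c' = fmap D' (point x') a' ->
                             fmap D bang0 c' = fmap D (from_empty X) d -> c' = c x').
  { intros x' c' H1 H0. symmetry. apply (proj2 (Hc x')). auto. }
  destruct (dirichlet_glue D HD X' (fmap D (from_empty X) d) c) as [e [[Eb Ep] Euniq]].
  { intros x'. apply Hc. }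
  exists e. split; [split |].
  - apply (dirichlet_ext D' HD').
    + rewrite <- Hn, Eb, Hn, <- Had, fmap_from_empty_comp. reflexivity.
    + intros x'. rewrite <- Hn, Ep. apply Hc.
  - apply (dirichlet_ext D HD).
    + rewrite fmap_from_empty_comp. exact Eb.
    + intros x. rewrite fmap_point_comp, Ep. symmetry. apply Hc_uniq.
      * rewrite Hn, <- Had, fmap_point_comp. reflexivity.
      * apply fmap_point_bang0.
  - intros e' [E1 E2]. apply Euniq. split.
    + rewrite <- E2, fmap_from_empty_comp. reflexivity.
    + intros x'. apply Hc_uniq.
      * rewrite Hn, E1. reflexivity.
      * rewrite fmap_point_bang0, <- E2, fmap_from_empty_comp. reflexivity.
Qed.

Lemma cartesian_iff_pullback_bang0 (phi : forall X, fob D X -> fob D' X) :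
  natural D D' phi ->
  cartesian D D' phi <->
  is_pullback (phi unit) (fmap D bang0) (fmap D' bang0) (phi Empty_set).
Proof.
  intros Hn. split.
  - intros Hcart. apply Hcart.
  - apply cartesian_of_pullback_bang0, Hn.
Qed.

Lemma cartesian_extension
  (f1 : fob D unit -> fob D' unit) (f0 : fob D Empty_set -> fob D' Empty_set) :
  is_pullback f1 (fmap D bang0) (fmap D' bang0) f0 ->
  exists phi : forall X, fob D X -> fob D' X,
    natural D D' phi /\ cartesian D D' phi /\
    (forall x, phi unit x = f1 x) /\ (forall x, phi Empty_set x = f0 x) /\
    (forall psi : forall X, fob D X -> fob D' X,
       natural D D' psi -> cartesian D D' psi ->
       (forall x, psi unit x = f1 x) -> (forall x, psi Empty_set x = f0 x) ->
       forall X x, psi X x = phi X x).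
Proof.
  intros P0.
  destruct (natural_extension f1 f0 (proj1 P0)) as [phi [Hn [H1 H0]]].
  exists phi. split; [exact Hn | split; [| split; [exact H1 | split; [exact H0 |]]]].
  - apply cartesian_of_pullback_bang0; [exact Hn |].
    replace (phi unit) with f1 by (extensionality x; symmetry; apply H1).
    replace (phi Empty_set) with f0 by (extensionality x; symmetry; apply H0).
    exact P0.
  - intros psi Hpsi _ Hpsi1 Hpsi0.
    apply natural_eq_of_eq_01; [exact Hn | exact Hpsi | |]; intros x.
    + rewrite Hpsi1, H1. reflexivity.
    + rewrite Hpsi0, H0. reflexivity.
Qed.

End Transformations.

Lemma colimit_cocone_jointly_surjective {J : Cat} (F : Diagram J) C
  (iota : forall j, dob F j -> C) :
  is_colimit F C iota -> forall c, exists j x, iota j x = c.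
Proof.
  intros [_ Huniv] c.
  destruct (Huniv Prop (fun _ _ => True) (fun _ _ _ _ => eq_refl)) as [h [_ Huniq]].
  assert (Himage : (exists j x, iota j x = c) = h c).
  { apply (Huniq (fun c => exists j x, iota j x = c)). intros j x.
    apply propositional_extensionality. split; [intros _; exact I | eauto]. }
  assert (Htrue : True = h c) by (apply (Huniq (fun _ => True)); auto).
  rewrite Himage, <- Htrue. exact I.
Qed.

Lemma connected_const {J : Cat} {A : Type} (f : ob J -> A) :
  connected J -> (forall a b, hom J a b -> f a = f b) -> forall a b, f a = f b.
Proof.
  intros [_ Hzigzag] Hf a b.
  induction (Hzigzag a b) as [x y [u] | x | x y _ IH | x y z _ IH1 _ IH2];
    eauto; congruence.
Qed.

Section Bundle.

Context {E B : Type} (p : E -> B).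

Definition bundle_fibre (b : B) : Type := {e : E | p e = b}.
Definition bundle_ob (X : Type) : Type := {b : B & X -> bundle_fibre b}.

Definition bundle_map X Y (f : X -> Y) (w : bundle_ob Y) : bundle_ob X :=
  existT _ (projT1 w) (fun x => projT2 w (f x)).

Lemma bundle_map_id X (w : bundle_ob X) : bundle_map X X (fun z => z) w = w.
Proof. destruct w; reflexivity. Qed.

Definition bundle_functor : CFun :=
  {| fob := bundle_ob; fmap := bundle_map; fmap_id := bundle_map_id;
     fmap_comp := fun X Y Z f g z => eq_refl |}.

Lemma bundle_ob_eq X (w1 w2 : bundle_ob X) :
  projT1 w1 = projT1 w2 ->
  (forall x, proj1_sig (projT2 w1 x) = proj1_sig (projT2 w2 x)) -> w1 = w2.
Proof.
  destruct w1 as [b1 s1], w2 as [b2 s2]; simpl; intros Hb Hs; subst b2. f_equal.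
  extensionality x. specialize (Hs x).
  destruct (s1 x), (s2 x); simpl in Hs; subst. f_equal. apply proof_irrelevance.
Qed.

(* The base point is constant along a connected cone, and the points of the
   fibres glue along the colimit. *)
Lemma bundle_functor_dirichlet : is_dirichlet bundle_functor.
Proof.
  intros J Hconn F C iota Hcolim T q Hq.
  destruct (proj1 Hconn) as [j0].
  set (base t := projT1 (q j0 t)).
  assert (Hbase : forall j t, projT1 (q j t) = base t).
  { intros j t. apply (connected_const (fun j => projT1 (q j t)) Hconn).
    intros a b u. rewrite <- (Hq a b u t). reflexivity. }
  assert (Hglue : forall t, exists k : C -> E,
             forall j x, k (iota j x) = proj1_sig (projT2 (q j t) x)).
  { intros t. destruct (proj2 Hcolim E (fun j x => proj1_sig (projT2 (q j t) x)))
      as [k [Hk _]]; eauto.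
    intros a b u x.
    exact (f_equal (fun w : bundle_ob (dob F a) => proj1_sig (projT2 w x))
                   (Hq a b u t)). }
  destruct (choice _ Hglue) as [k Hk].
  assert (Hpk : forall t c, p (k t c) = base t).
  { intros t c.
    destruct (colimit_cocone_jointly_surjective F C iota Hcolim c) as [j [x <-]].
    rewrite Hk, (proj2_sig (projT2 (q j t) x)). apply Hbase. }
  exists (fun t => existT _ (base t) (fun c => exist _ (k t c) (Hpk t c))). split.
  - intros j t. apply bundle_ob_eq; simpl.
    + symmetry. apply Hbase.
    + intros x. apply Hk.
  - intros h' Hh' t. apply bundle_ob_eq; simpl.
    + exact (f_equal (@projT1 _ _) (Hh' j0 t)).
    + intros c.
      destruct (colimit_cocone_jointly_surjective F C iota Hcolim c) as [j [x <-]].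
      rewrite Hk.
      exact (f_equal (fun w : bundle_ob (dob F j) => proj1_sig (projT2 w x)) (Hh' j t)).
Qed.

Definition bundle_total (w : bundle_ob unit) : E := proj1_sig (projT2 w tt).
Definition bundle_base (w : bundle_ob Empty_set) : B := projT1 w.

Definition bundle_point (e : E) : bundle_ob unit :=
  existT _ (p e) (fun _ => exist _ e eq_refl).

Lemma bundle_point_total (w : bundle_ob unit) : bundle_point (bundle_total w) = w.
Proof.
  apply bundle_ob_eq; simpl.
  - exact (proj2_sig (projT2 w tt)).
  - intros []. reflexivity.
Qed.

Lemma bundle_total_bijective : bijective bundle_total.
Proof. exists bundle_point. split; [exact bundle_point_total | reflexivity]. Qed.

Lemma bundle_base_bijective : bijective bundle_base.
Proof.
  exists (fun b => existT _ b (from_empty (bundle_fibre b))). split.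
  - intros w. apply bundle_ob_eq; [reflexivity | intros []].
  - reflexivity.
Qed.

Lemma bundle_pullback :
  is_pullback bundle_total (fmap bundle_functor bang0) p bundle_base.
Proof.
  apply is_pullback_pointwise. split.
  - intros w. exact (proj2_sig (projT2 w tt)).
  - intros e w Hew. exists (bundle_point e). split.
    + split; [reflexivity |]. apply bundle_ob_eq; [exact Hew | intros []].
    + intros w' [Htotal _]. rewrite <- Htotal. apply bundle_point_total.
Qed.

End Bundle.

Theorem proposition3p1 :
  (* Main claim: phi cartesian <-> the square at !_0 is a pullback. *)
  (forall (D D' : CFun) (phi : forall X, fob D X -> fob D' X),
     is_dirichlet D -> is_dirichlet D' -> natural D D' phi ->
     (cartesian D D' phi <->
      is_pullback (phi unit) (fmap D bang0) (fmap D' bang0) (phi Empty_set)))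
  /\
  (* Corollary: evaluation at !_0 restricts to an equivalence Dir_cart ~ Set^->_pb. *)
  (* (i) fully faithful on cartesian transformations / pullback squares *)
  (forall (D D' : CFun), is_dirichlet D -> is_dirichlet D' ->
     forall (f1 : fob D unit -> fob D' unit) (f0 : fob D Empty_set -> fob D' Empty_set),
       is_pullback f1 (fmap D bang0) (fmap D' bang0) f0 ->
       exists phi : forall X, fob D X -> fob D' X,
         natural D D' phi /\ cartesian D D' phi /\
         (forall x, phi unit x = f1 x) /\ (forall x, phi Empty_set x = f0 x) /\
         (forall psi : forall X, fob D X -> fob D' X,
            natural D D' psi -> cartesian D D' psi ->
            (forall x, psi unit x = f1 x) -> (forall x, psi Empty_set x = f0 x) ->
            forall X x, psi X x = phi X x))
  /\
  (* (ii) essentially surjective *)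
  (forall (E B : Type) (p : E -> B),
     exists D : CFun, is_dirichlet D /\
       exists (a : fob D unit -> E) (b : fob D Empty_set -> B),
         bijective a /\ bijective b /\
         is_pullback a (fmap D bang0) p b).
Proof.
  split; [| split].
  - intros D D' phi HD HD'. exact (cartesian_iff_pullback_bang0 D D' HD HD' phi).
  - intros D D' HD HD'. exact (cartesian_extension D D' HD HD').
  - intros E B p. exists (bundle_functor p).
    split; [exact (bundle_functor_dirichlet p) |].
    exists (bundle_total p), (bundle_base p).
    split; [exact (bundle_total_bijective p) |].
    split; [exact (bundle_base_bijective p) | exact (bundle_pullback p)].
Qed.
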